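(* Let $X$ be a set with at least two elements and let $A_1,\dots,A_m$ be finite subsets of the free monoid $\langle X\rangle$ such that all elements of $A_i$ have the same degree $n_i$ ($i=1,\dots,m$). Then there exist an integer $t\geq\max\{n_i\mid 1\le i\le m\}$ and elements $\nu_1,\dots,\nu_m\in\langle X\rangle$ with $\deg\nu_i=t-n_i$ such that the sets $A_1\nu_1,\dots,A_m\nu_m$ are pairwise disjoint.
   Context: The degree of a monomial $x_1x_2\cdots x_n\in\langle X\rangle$ ($x_i\in X$) is $n$. $A_i\nu_i=\{a\nu_i\mid a\in A_i\}$. *)

From Stdlib Require List.
From mathcomp Require Import all_boot.
Set Implicit Arguments. Unset Strict Implicit. Unset Printing Implicit Defensive.

(* Free monoid <X> on a type X: words are sequences (seq X), product is
   concatenation, degree is length. *)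
Definition word (X : Type) := seq X.
Definition deg (X : Type) (w : word X) : nat := size w.

Definition rmul (X : Type) (A : seq (word X)) (nu : word X) : seq (word X) :=
  map (fun a => a ++ nu) A.

Definition words_disjoint (X : Type) (B C : seq (word X)) : Prop :=
  forall w, List.In w B -> List.In w C -> False.

(* Take [nu_i = x^(N - n_i) c_i] with [N] the largest [n_i] and
   [c_i = y^i x^(m - i)].  Every word of [A_i nu_i] is [u c_i] with [deg u = N],
   so words coming from different [i] differ in their last [m] letters, because
   the [c_i] are pairwise distinct when [x <> y]. *)

From mathcomp Require Import all_boot.
Set Implicit Arguments.
Unset Strict Implicit.

Lemma mem_rmulP (X : Type) (A : seq (word X)) (nu w : word X) :
  List.In w (rmul A nu) <-> exists a, List.In a A /\ w = a ++ nu.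
Proof.
elim: A => [|b A IH] /=; first by split=> // -[a []].
rewrite IH; split=> [[<- | [a [Aa ->]]] | [a [[<- | Aa] ->]]].
- by exists b; split; [left |].
- by exists a; split; [right |].
- by left.
- by right; exists a.
Qed.

Lemma rmul_cat (X : Type) (A : seq (word X)) (p q : word X) :
  rmul A (p ++ q) = rmul (rmul A p) q.
Proof. by rewrite /rmul -map_comp; apply: eq_map => a /=; rewrite catA. Qed.

Lemma deg_rmul (X : Type) (A : seq (word X)) (nu : word X) (k : nat) :
  (forall a, List.In a A -> deg a = k) ->
  forall w, List.In w (rmul A nu) -> deg w = k + deg nu.
Proof. by move=> degA w /mem_rmulP [a [/degA <- ->]]; rewrite /deg size_cat. Qed.

Lemma rmul_disjoint (X : Type) (A B : seq (word X)) (nu nu' : word X) (k : nat) :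
  (forall a, List.In a A -> deg a = k) -> (forall b, List.In b B -> deg b = k) ->
  nu <> nu' -> words_disjoint (rmul A nu) (rmul B nu').
Proof.
move=> degA degB neq_nu w /mem_rmulP [a [/degA dega ->]].
move=> /mem_rmulP [b [/degB degb /(congr1 (drop k))]].
by rewrite !drop_size_cat.
Qed.

Definition code_word (X : Type) (x y : X) (m i : nat) : word X :=
  nseq i y ++ nseq (m - i) x.

Lemma deg_code_word (X : Type) (x y : X) (m i : nat) :
  i <= m -> deg (code_word x y m i) = m.
Proof. by rewrite /deg /code_word size_cat !size_nseq => /subnKC. Qed.

(* The [i]-th letter distinguishes [code_word i] from [code_word j] for [i < j];
   [x] is also the default value of [nth], so no bound on [i] is needed. *)
Lemma code_word_inj (X : Type) (x y : X) (m : nat) :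
  x <> y -> injective (code_word x y m).
Proof.
move=> neq_xy.
have lt_neq i j : i < j -> code_word x y m i <> code_word x y m j.
  move=> lt_ij /(congr1 (nth x ^~ i)); rewrite /code_word !nth_cat !size_nseq.
  by rewrite ltnn lt_ij subnn !nth_nseq lt_ij; case: ifP.
move=> i j eq_ij.
by case: (ltngtP i j) => // [/lt_neq /(_ eq_ij) | /lt_neq /(_ (esym eq_ij))].
Qed.

Theorem mainTheorem6 (X : Type) (hX : exists x y : X, x <> y)
  (m : nat) (A : 'I_m -> seq (word X)) (n : 'I_m -> nat)
  (hdeg : forall i a, List.In a (A i) -> deg a = n i) :
  exists t : nat, (forall i, n i <= t) /\
    exists nu : 'I_m -> word X,
      (forall i, deg (nu i) = t - n i) /\
      (forall i j, i <> j -> words_disjoint (rmul (A i) (nu i)) (rmul (A j) (nu j))).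
Proof.
case: hX => x [y neq_xy].
pose N := \max_i n i.
have le_nN i : n i <= N by apply: leq_bigmax.
exists (N + m); split=> [i | ]; first by rewrite (leq_trans (le_nN i)) ?leq_addr.
exists (fun i => nseq (N - n i) x ++ code_word x y m i); split=> [i | i j neq_ij].
  rewrite /deg size_cat size_nseq -/(deg _) deg_code_word ?addnBAC //.
  exact: ltnW.
have deg_pad k : forall w, List.In w (rmul (A k) (nseq (N - n k) x)) -> deg w = N.
  by move=> w /(deg_rmul (hdeg k)); rewrite /deg size_nseq subnKC.
rewrite (rmul_cat (A i)) (rmul_cat (A j)).
apply: (rmul_disjoint (deg_pad i) (deg_pad j)).
by move/(code_word_inj neq_xy)/val_inj.
Qed.
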